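(* Let $G$ be a graph of order $n\ge 9$. If $\tau(G)\le\frac{n}{2}$ and ${\rm diam}(G)=3$, then $\beta_p(G)\le n-3$.
   Context: All graphs are finite, simple, undirected and connected. Two vertices $u,v$ are twins if $N(u)\setminus\{v\}=N(v)\setminus\{u\}$; the twin number $\tau(G)$ is the maximum cardinality of an equivalence class of the twin relation. For a partition $\Pi=\{S_1,\dots,S_k\}$ of $V(G)$, $r(u|\Pi)=(d(u,S_1),\dots,d(u,S_k))$ with $d(u,S)=\min_{w\in S}d(u,w)$; $\Pi$ is locating if $r(u|\Pi)\ne r(v|\Pi)$ for all distinct $u,v$; $\beta_p(G)$ is the minimum size of a locating partition. *)

From mathcomp Require Import all_boot.
Set Implicit Arguments.
Unset Strict Implicit.
Unset Printing Implicit Defensive.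

Section Graphs.
Variables (T : finType) (e : rel T).

Definition simple_graph := symmetric e /\ irreflexive e.

Definition connected_graph := forall u v : T, connect e u v.

Definition walkb (n : nat) (u v : T) : bool :=
  [exists p : n.-tuple T, path e u p && (last u p == v)].

(* distance: the least n such that a walk of length n from u to v exists
   (searched among n < #|T|, which suffices in a connected graph) *)
Definition dist (u v : T) : nat := find (fun n => walkb n u v) (iota 0 #|T|).

Definition diam : nat := \max_(u : T) \max_(v : T) dist u v.

Definition nbhd (u : T) : {set T} := [set w | e u w].

Definition twins (u v : T) : bool := (nbhd u :\ v) == (nbhd v :\ u).

Definition twin_class (u : T) : {set T} := [set v | twins u v].

Definition twin_number : nat := \max_(u : T) #|twin_class u|.

Definition dist_set (u : T) (S : {set T}) : nat :=
  \big[minn/#|T|]_(w in S) dist u w.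

Definition locating_partition (P : {set {set T}}) : bool :=
  partition P [set: T] &&
  [forall u : T, forall v : T,
     (u != v) ==> [exists S in P, dist_set u S != dist_set v S]].

Definition partition_dim : nat :=
  \big[minn/#|T|]_(P : {set {set T}} | locating_partition P) #|P|.

End Graphs.

(* Merging three disjoint pairs {x_i, y_i} into blocks and keeping all other
   vertices as singletons gives a partition with n - 3 parts; it is locating
   as soon as each pair is separated by the distance to some vertex r_i outside
   the six, since the singleton {r_i} then tells x_i from y_i.
   Fix a path u a b v with d(u, v) = 3.  If three vertices lie at some distance
   k from u and three others (not u) do not, u separates three such pairs.
   Otherwise all but two vertices other than u are at one distance k from u,
   and similarly for v.  In every combination of these distances the vertices
   off the path form a module M attached to the path in a fixed way.  A vertex
   of M adjacent to some but not all other vertices of M yields three separated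
   pairs; if there is none, M is a twin class of more than n/2 vertices,
   contradicting tau(G) <= n/2. *)

From mathcomp Require Import all_boot zify.
Set Implicit Arguments.
Unset Strict Implicit.
Unset Printing Implicit Defensive.

Section Partition.
Variables (T : finType) (e : rel T).
Hypotheses (esym : symmetric e) (eirr : irreflexive e) (conn : connected_graph e).

Ltac contra_hyps := match goal with
  | H : is_true (?a != ?a) |- _ => by case/eqP: H
  | H : is_true (e ?a ?a) |- _ => by rewrite eirr in H
  | H : is_true (e ?a ?b), H' : is_true (~~ e ?a ?b) |- _ => by rewrite H in H'
  | H : is_true (e ?a ?b), H' : is_true (~~ e ?b ?a) |- _ => by rewrite esym H in H'
  | H : is_true (?a \notin ?s) |- _ => by rewrite !inE eqxx ?orbT in H
  | H : is_true (uniq ?s) |- _ => by rewrite /= !inE eqxx ?orbT ?andbF in H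
  end.
Ltac side_tac :=
  first [done | by rewrite esym | by rewrite eq_sym | apply/eqP => ?; subst; contra_hyps].
Ltac uniq_tac := rewrite /= ?inE ?negb_or; do ?(apply/andP; split); side_tac.

Lemma walkb0 x y : walkb e 0 x y = (x == y).
Proof.
apply/existsP/eqP => [[p /andP[_ /eqP <-]]|->]; first by rewrite tuple0.
by exists [tuple]; rewrite /= eqxx.
Qed.

Lemma walkbS k x y : walkb e k.+1 x y = [exists z, e x z && walkb e k z y].
Proof.
apply/existsP/existsP => [[p]|[z /andP[xz /existsP[p /andP[pth lst]]]]].
  case/tupleP: p => z p /= /andP[/andP[xz pth] lst].
  by exists z; rewrite xz; apply/existsP; exists p; rewrite pth.
by exists [tuple of z :: p]; rewrite /= xz pth.
Qed.

Lemma walkbSr k x z y : walkb e k x z -> e z y -> walkb e k.+1 x y.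
Proof.
elim: k x => [|k IHk] x.
  rewrite walkb0 => /eqP-> zy; rewrite walkbS; apply/existsP; exists y.
  by rewrite zy walkb0 eqxx.
rewrite walkbS => /existsP[w /andP[xw wz]] zy.
by rewrite walkbS; apply/existsP; exists w; rewrite xw (IHk _ wz zy).
Qed.

Lemma walkb_sym k x y : walkb e k x y -> walkb e k y x.
Proof.
elim: k x y => [|k IHk] x y; first by rewrite !walkb0 eq_sym.
rewrite walkbS => /existsP[z /andP[xz zy]].
by apply: walkbSr (IHk _ _ zy) _; rewrite esym.
Qed.

Lemma walkb_connect x y : connect e x y -> exists2 k, k < #|T| & walkb e k x y.
Proof.
case/connectP => p /shortenP[p' pth' uniq_p' _] ->.
exists (size p'); last by apply/existsP; exists (in_tuple p'); rewrite pth' eqxx.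
by rewrite -ltnS -[(size p').+1]/(size (x :: p')) -(card_uniqP uniq_p'); apply: max_card.
Qed.

Lemma dist_lt x y : dist e x y < #|T|.
Proof.
have [k lt_k walk_k] := walkb_connect (conn x y).
rewrite /dist -[X in _ < X](size_iota 0) -has_find.
by apply/hasP; exists k; rewrite ?mem_iota.
Qed.

Lemma walkb_dist x y : walkb e (dist e x y) x y.
Proof.
have := dist_lt x y; rewrite /dist -[X in _ < X](size_iota 0) -has_find.
by move/(nth_find 0); rewrite -/(dist e x y) nth_iota ?dist_lt.
Qed.

Lemma dist_leq x y k : walkb e k x y -> dist e x y <= k.
Proof.
move=> walk_k; rewrite leqNgt; apply/negP => lt_k.
have := before_find 0 lt_k; rewrite nth_iota ?add0n ?walk_k //.
exact: ltn_trans lt_k (dist_lt x y).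
Qed.

Lemma dist_sym x y : dist e x y = dist e y x.
Proof. by apply/eqP; rewrite eqn_leq !dist_leq // walkb_sym // walkb_dist. Qed.

Lemma dist_eq0 x y : (dist e x y == 0) = (x == y).
Proof.
apply/eqP/eqP => [d0|->]; first by have := walkb_dist x y; rewrite d0 walkb0 => /eqP.
by apply/eqP; rewrite -leqn0 dist_leq ?walkb0.
Qed.

Lemma dist_xx x : dist e x x = 0.
Proof. by apply/eqP; rewrite dist_eq0. Qed.

Lemma dist_eq1 x y : (dist e x y == 1) = e x y.
Proof.
apply/eqP/idP => [d1|xy].
  have := walkb_dist x y; rewrite d1 walkbS => /existsP[z /andP[xz]].
  by rewrite walkb0 => /eqP <-.
have : dist e x y != 0 by rewrite dist_eq0; apply: contraTneq xy => ->; rewrite eirr.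
suff : dist e x y <= 1 by case: (dist e x y) => [|[]].
by rewrite dist_leq // walkbS; apply/existsP; exists y; rewrite xy walkb0 eqxx.
Qed.

Lemma dist_leqS x z y : e x z -> dist e x y <= (dist e z y).+1.
Proof. by move=> xz; rewrite dist_leq // walkbS; apply/existsP; exists z; rewrite xz walkb_dist. Qed.

Lemma dist_step x y k : dist e x y = k.+1 -> exists2 z, e x z & dist e z y = k.
Proof.
move=> dS; have := walkb_dist x y; rewrite dS walkbS => /existsP[z /andP[xz walk_z]].
exists z => //; apply/eqP; rewrite eqn_leq dist_leq //=.
by have := dist_leqS y xz; rewrite dS.
Qed.

Lemma dist_eq2 x z y : e x z -> e z y -> x != y -> ~~ e x y -> dist e x y = 2.
Proof.
move=> xz zy xy nxy.
have : dist e x y <= 2.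
  by rewrite dist_leq // walkbS; apply/existsP; exists z; rewrite xz; apply: walkbSr zy; rewrite walkb0 eqxx.
by rewrite -dist_eq0 in xy; rewrite -dist_eq1 in nxy; case: (dist e x y) xy nxy => [|[|[]]].
Qed.

Lemma neq_dist x y w : dist e x w != dist e y w -> x != y.
Proof. by apply: contraNneq => ->. Qed.

Lemma dist_neq_adj x y w : e x w -> ~~ e y w -> dist e x w != dist e y w.
Proof. by rewrite -!dist_eq1 => /eqP->; rewrite eq_sym. Qed.

Lemma dist_inner3 x y z t : e x y -> e y z -> e z t -> dist e x t = 3 -> dist e x z = 2.
Proof.
move=> xy yz zt xt3; apply/eqP; rewrite eqn_leq; apply/andP; split.
  by apply: dist_leq; rewrite walkbS; apply/existsP; exists y; rewrite xy (walkbSr _ yz) // walkb0.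
by rewrite -ltnS -xt3 dist_sym (dist_sym x z) dist_leqS // esym.
Qed.

Lemma dist_le_diam x y : dist e x y <= diam e.
Proof.
apply: leq_trans (@leq_bigmax T (fun y => dist e x y) y) _.
exact: (@leq_bigmax T (fun x => \max_y dist e x y) x).
Qed.

Lemma bigmin_leq (I : finType) (P : pred I) (F : I -> nat) m i0 :
  P i0 -> \big[minn/m]_(i | P i) F i <= F i0.
Proof.
move=> P_i0; rewrite -big_filter.
have : i0 \in [seq i <- index_enum I | P i] by rewrite mem_filter P_i0 mem_index_enum.
elim: (filter _ _) => // j s IHs; rewrite inE big_cons => /orP[/eqP <-|/IHs le_s].
  exact: geq_minl.
exact: leq_trans (geq_minr _ _) le_s.
Qed.

Lemma dist_set_mem x (S : {set T}) : x \in S -> dist_set e x S = 0.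
Proof.
by move=> Sx; apply/eqP; rewrite -leqn0 -(dist_xx x); apply: bigmin_leq.
Qed.

Lemma dist_set_gt0 x (S : {set T}) : x \notin S -> 0 < dist_set e x S.
Proof.
move=> Sx; rewrite /dist_set; elim/big_ind: _ => [| m n | w Sw].
- exact: leq_ltn_trans (dist_lt x x).
- by rewrite leq_min => -> ->.
- by rewrite lt0n dist_eq0; apply: contraNneq Sx => ->.
Qed.

Lemma dist_set1 x r : dist_set e x [set r] = dist e x r.
Proof. by rewrite /dist_set big_set1E; apply/minn_idPl/ltnW/dist_lt. Qed.

(* The fibres of [glue3] are the blocks {x_i, y_i} and singletons. *)
Definition glue3 (x1 y1 x2 y2 x3 y3 x : T) : T :=
  if x == y1 then x1 else if x == y2 then x2 else if x == y3 then x3 else x.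

Lemma glue3_eq x1 y1 x2 y2 x3 y3 u v :
  uniq [:: x1; y1; x2; y2; x3; y3] -> u != v ->
  glue3 x1 y1 x2 y2 x3 y3 u = glue3 x1 y1 x2 y2 x3 y3 v ->
  [|| (u == x1) && (v == y1), (u == y1) && (v == x1), (u == x2) && (v == y2),
      (u == y2) && (v == x2), (u == x3) && (v == y3) | (u == y3) && (v == x3)].
Proof.
rewrite /= !inE !negb_or -!andbA => neqs uv; do ![case/andP: neqs => ? neqs].
rewrite /glue3; do ![case: ifP => /eqP ?]; move=> uv'; subst; rewrite ?eqxx ?orbT //.
all: contra_hyps.
Qed.

Lemma glue3_fixed x1 y1 x2 y2 x3 y3 r y :
  r \notin [:: x1; y1; x2; y2; x3; y3] ->
  (glue3 x1 y1 x2 y2 x3 y3 y == r) = (y == r).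
Proof.
rewrite !inE !negb_or => neqs; do ![case/andP: neqs => ? neqs].
rewrite /glue3; do ![case: ifP => /eqP ?]; subst => //.
all: by apply/eqP/eqP => ?; subst; contra_hyps.
Qed.

Lemma glue3_notin x1 y1 x2 y2 x3 y3 x :
  uniq [:: x1; y1; x2; y2; x3; y3] ->
  glue3 x1 y1 x2 y2 x3 y3 x \notin [:: y1; y2; y3].
Proof.
rewrite /= !inE !negb_or -!andbA => neqs; do ![case/andP: neqs => ? neqs].
rewrite /glue3; do ![case: ifP => /eqP ?]; subst.
all: do !(apply/andP; split); by [|rewrite eq_sym|apply/eqP].
Qed.

Lemma partition_dim_leq P : locating_partition e P -> partition_dim e <= #|P|.
Proof. exact: bigmin_leq. Qed.

Lemma partition_dim_resolved_pairs x1 y1 x2 y2 x3 y3 r1 r2 r3 :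
  uniq [:: x1; y1; x2; y2; x3; y3] ->
  r1 \notin [:: x1; y1; x2; y2; x3; y3] ->
  r2 \notin [:: x1; y1; x2; y2; x3; y3] ->
  r3 \notin [:: x1; y1; x2; y2; x3; y3] ->
  dist e x1 r1 != dist e y1 r1 -> dist e x2 r2 != dist e y2 r2 ->
  dist e x3 r3 != dist e y3 r3 ->
  partition_dim e <= #|T| - 3.
Proof.
move=> uniq_xy r1_out r2_out r3_out res1 res2 res3.
pose g := glue3 x1 y1 x2 y2 x3 y3.
pose P := preim_partition g [set: T].
pose B x := [set y in [set: T] | g x == g y].
have BP x : B x \in P by apply: imset_f; rewrite inE.
have inB x y : (y \in B x) = (g x == g y) by rewrite !inE.
have B_singleton r : r \notin [:: x1; y1; x2; y2; x3; y3] -> B r = [set r].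
  move=> r_out; have /eqP gr : g r == r by rewrite glue3_fixed.
  by apply/setP => y; rewrite inB inE gr eq_sym glue3_fixed.
have resolved r x y : r \notin [:: x1; y1; x2; y2; x3; y3] -> dist e x r != dist e y r ->
    [exists S in P, dist_set e x S != dist_set e y S].
  by move=> r_out res; apply/exists_inP; exists (B r); rewrite ?BP // B_singleton // !dist_set1.
apply: leq_trans (partition_dim_leq (P := P) _) _.
  rewrite /locating_partition preim_partitionP; apply/forallP => x; apply/forallP => y.
  apply/implyP => xy; case: (eqVneq (g x) (g y)) => gxy; last first.
    apply/exists_inP; exists (B x); rewrite ?BP // dist_set_mem ?inB //.
    by rewrite eq_sym -lt0n dist_set_gt0 // inB.
  case/or4P: (glue3_eq uniq_xy xy gxy) => [|||/or3P[]] /andP[/eqP-> /eqP->].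
  - exact: resolved r1_out res1.
  - by apply: resolved r1_out _; rewrite eq_sym.
  - exact: resolved r2_out res2.
  - by apply: resolved r2_out _; rewrite eq_sym.
  - exact: resolved r3_out res3.
  - by apply: resolved r3_out _; rewrite eq_sym.
have -> : P = (fun c => [set y in [set: T] | c == g y]) @: (g @: [set: T]) by rewrite -imset_comp.
apply: leq_trans (leq_imset_card _ _) _.
have /subset_leq_card : g @: [set: T] \subset ~: [set y in [:: y1; y2; y3]].
  by apply/subsetP => _ /imsetP[x _ ->]; rewrite in_setC in_set glue3_notin.
have uniq_y : uniq [:: y1; y2; y3].
  by apply: subseq_uniq uniq_xy; apply/subseqP; exists [:: false; true; false; true; false; true].
have := cardsC [set y in [:: y1; y2; y3]]; rewrite cardsE (card_uniqP uniq_y) /=.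
lia.
Qed.

Lemma exists_notin (s : seq T) : size s < #|T| -> exists x, x \notin s.
Proof.
move=> lt_s; have /existsP[x] : [exists x, x \notin s]; last by exists x.
rewrite -negb_forall; apply: contraTN lt_s => /forallP in_s; rewrite -leqNgt.
apply: leq_trans (card_size s); apply/subset_leq_card/subsetP => x _.
exact: in_s.
Qed.

Lemma card_set_notin (s : seq T) : uniq s -> #|[set x | x \notin s]| = #|T| - size s.
Proof.
move=> uniq_s; have := cardsC [set x in s].
by rewrite cardsE (card_uniqP uniq_s) => <-; rewrite addKn; apply: eq_card => x; rewrite !inE.
Qed.

Definition module (M : {set T}) :=
  forall x y z, x \in M -> y \in M -> z \notin M -> e x z = e y z.

Lemma module_twins (M : {set T}) :
  module M ->
  (forall x, x \in M -> {in M, forall y, ~~ e x y} \/ {in M, forall y, y != x -> e x y}) ->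
  {in M &, forall x y, twins e x y}.
Proof.
move=> modM dichotomy x y Mx My; apply/eqP/setP => z; rewrite !inE.
case: (eqVneq x y) => [<-//|xy].
case: (eqVneq z x) => [->|zx]; first by rewrite eirr andbF.
case: (eqVneq z y) => [->|zy]; first by rewrite eirr andbF.
have [Mz|Mz] := boolP (z \in M); last exact: modM.
have [x_iso|x_univ] := dichotomy x Mx; have [y_iso|y_univ] := dichotomy y My.
- by rewrite (negbTE (x_iso z Mz)) (negbTE (y_iso z Mz)).
- by have := x_iso y My; rewrite esym y_univ.
- by have := y_iso x Mx; rewrite esym x_univ // eq_sym.
- by rewrite x_univ ?y_univ.
Qed.

Hypothesis n9 : 9 <= #|T|.
Hypothesis tw : 2 * twin_number e <= #|T|.

Lemma large_module_split (M : {set T}) :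
  module M -> #|T| < 2 * #|M| ->
  exists x y z, [/\ x \in M, y \in M, z \in M & [/\ e x y, z != x & ~~ e x z]].
Proof.
move=> modM big.
have [|/exists_inPn no_split] :=
  boolP [exists x in M, [exists y in M, e x y] && [exists z in M, (z != x) && ~~ e x z]].
  case/exists_inP => x Mx /andP[/exists_inP[y My xy] /exists_inP[z Mz /andP[zx xz]]].
  by exists x, y, z.
have [x0 Mx0] : exists x0, x0 \in M.
  by apply/card_gt0P; move: big; case: #|M| => //; rewrite muln0.
have twins_x0 : {in M, forall y, twins e x0 y}.
  move=> y My; apply: module_twins modM _ x0 y Mx0 My => x Mx.
  move: (no_split x Mx); rewrite negb_and => /orP[/exists_inPn iso|/exists_inPn univ].
    by left.
  by right => z Mz zx; have := univ z Mz; rewrite zx negbK.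
have : #|M| <= twin_number e.
  apply: leq_trans (leq_bigmax x0); apply/subset_leq_card/subsetP => y My.
  by rewrite inE twins_x0.
by move: big tw; lia.
Qed.

Lemma notin_module_split (s : seq T) :
  uniq s -> size s <= 4 -> module [set x | x \notin s] ->
  exists x y z, [/\ x \notin s, y \notin s, z \notin s & [/\ e x y, z != x & ~~ e x z]].
Proof.
move=> uniq_s small_s /large_module_split[|x [y [z]]]; last by rewrite !in_set; exists x, y, z.
(* [set] identifies the differently elaborated copies of #|T| for lia. *)
by rewrite card_set_notin //; move: n9; set n := #|T|; lia.
Qed.

Lemma partition_dim_module_nbhd2_of4 a1 a2 b1 b2 :
  uniq [:: a1; a2; b1; b2] ->
  (forall m, m \notin [:: a1; a2; b1; b2] -> [/\ e m a1, e m a2, ~~ e m b1 & ~~ e m b2]) ->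
  partition_dim e <= #|T| - 3.
Proof.
move=> uniq_s adj.
have modM : module [set x | x \notin [:: a1; a2; b1; b2]].
  move=> x y z; rewrite !in_set negbK => /adj[xa1 xa2 xb1 xb2] /adj[ya1 ya2 yb1 yb2].
  rewrite !inE => /or4P[]/eqP->; rewrite ?xa1 ?xa2 ?ya1 ?ya2 //.
    by rewrite (negbTE xb1) (negbTE yb1).
  by rewrite (negbTE xb2) (negbTE yb2).
have [x [y [z [Mx My Mz [xy zx xz]]]]] := notin_module_split uniq_s isT modM.
have [xa1 xa2 xb1 xb2] := adj x Mx.
apply: (@partition_dim_resolved_pairs a1 b1 a2 b2 y z x x x); try uniq_tac.
all: by apply: dist_neq_adj; rewrite esym.
Qed.

Lemma partition_dim_module_nbhd2_of3 p q r :
  uniq [:: p; q; r] -> e p q -> ~~ e p r -> ~~ e q r ->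
  (forall m, m \notin [:: p; q; r] -> [/\ e m q, e m r & ~~ e m p]) ->
  partition_dim e <= #|T| - 3.
Proof.
move=> uniq_s pq pr qr adj.
have modM : module [set x | x \notin [:: p; q; r]].
  move=> x y z; rewrite !in_set negbK => /adj[xq xr xp] /adj[yq yr yp].
  by rewrite !inE => /or3P[]/eqP->; rewrite ?xq ?xr ?yq ?yr // (negbTE xp) (negbTE yp).
have [x [y [z [Mx My Mz [xy zx xz]]]]] := notin_module_split uniq_s isT modM.
have [w1] : exists w, w \notin [:: p; q; r] ++ [:: x; y; z].
  by apply: exists_notin; apply: leq_ltn_trans n9.
rewrite mem_cat negb_or => /andP[/adj[w1q w1r w1p] w1_xyz].
have [w2] : exists w, w \notin [:: p; q; r] ++ [:: x; y; z; w1].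
  by apply: exists_notin; apply: leq_ltn_trans n9.
rewrite mem_cat negb_or => /andP[/adj[w2q w2r w2p] w2_xyz].
have w2_p : dist e w2 p = 2 by apply: (dist_eq2 w2q); side_tac.
(* The only neighbour of p is q, which misses r. *)
have r_p : dist e r p != 2.
  apply/eqP => /dist_step[c rc /eqP]; rewrite dist_eq1 => cp.
  have [|/adj[_ _ /negP]//] := boolP (c \in [:: p; q; r]).
  by rewrite !inE => /or3P[]/eqP ?; subst c; contra_hyps.
have [xq xr xp] := adj x Mx.
apply: (@partition_dim_resolved_pairs y z q w1 r w2 x p p); try uniq_tac.
- by apply: dist_neq_adj; rewrite esym.
- by apply: dist_neq_adj; side_tac.
- by rewrite w2_p.
Qed.

Lemma partition_dim_module_path u a b :
  uniq [:: u; a; b] -> e u a -> ~~ e u b -> e a b ->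
  (forall m, m \notin [:: u; a; b] -> [/\ e m b, ~~ e m a, ~~ e m u & dist e u m = 3]) ->
  partition_dim e <= #|T| - 3.
Proof.
move=> uniq_s ua ub ab adj.
have modM : module [set x | x \notin [:: u; a; b]].
  move=> x y z; rewrite !in_set negbK => /adj[xb xa xu _] /adj[yb ya yu _].
  by rewrite !inE => /or3P[]/eqP->; rewrite ?xb ?yb // ?(negbTE xa, negbTE ya) ?(negbTE xu, negbTE yu).
have [x [y [z [Mx My Mz [xy zx xz]]]]] := notin_module_split uniq_s isT modM.
have [t] : exists w, w \notin [:: u; a; b] ++ [:: x; y; z].
  by apply: exists_notin; apply: leq_ltn_trans n9.
rewrite mem_cat negb_or => /andP[Mt t_xyz].
have [[xb xa xu u_x] [yb ya yu _]] := (adj x Mx, adj y My).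
have [[zb za zu _] [tb ta tu _]] := (adj z Mz, adj t Mt).
have b_x : dist e b x = 1 by apply/eqP; rewrite dist_eq1 esym.
have y_x : dist e y x = 1 by apply/eqP; rewrite dist_eq1 esym.
have a_x : dist e a x = 2 by apply: (dist_eq2 ab); side_tac.
have z_x : dist e z x = 2 by apply: (dist_eq2 zb); side_tac.
have [tx|ntx] := boolP (e t x).
  have t_x : dist e t x = 1 by apply/eqP; rewrite dist_eq1.
  by apply: (@partition_dim_resolved_pairs b a y z t u x x x); try uniq_tac;
    rewrite ?b_x ?a_x ?y_x ?z_x ?t_x ?u_x.
have t_x : dist e t x = 2 by apply: (dist_eq2 tb); side_tac.
by apply: (@partition_dim_resolved_pairs a u b z y t x x x); try uniq_tac;
  rewrite ?b_x ?a_x ?y_x ?z_x ?t_x ?u_x.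
Qed.

Hypothesis diam3 : diam e = 3.

Definition off_layer w k := [set x | (x != w) && (dist e x w != k)].

Lemma layer_or_partition_dim w :
  partition_dim e <= #|T| - 3 \/ exists2 k, k \in [:: 1; 2; 3] & #|off_layer w k| <= 2.
Proof.
pose L k := [set x | dist e x w == k].
have [k k123 big_L] : exists2 k, k \in [:: 1; 2; 3] & 2 < #|L k|.
  have cover : [set: T] \subset w |: (L 1 :|: L 2 :|: L 3).
    apply/subsetP => x _; rewrite !inE -dist_eq0.
    by have := dist_le_diam x w; rewrite diam3; case: (dist e x w) => [|[|[|[]]]].
  have le_T : #|T| <= 1 + (#|L 1| + #|L 2| + #|L 3|).
    rewrite -cardsT; apply: leq_trans (subset_leq_card cover) _.
    rewrite cardsU1 leq_add ?leq_b1 //.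
    by apply: leq_trans (leq_card_setU _ _) _; rewrite leq_add2r leq_card_setU.
  case: (leqP #|L 1| 2) => [le1|]; last by exists 1.
  case: (leqP #|L 2| 2) => [le2|]; last by exists 2.
  case: (leqP #|L 3| 2) => [le3|]; last by exists 3.
  by move: le_T n9 le1 le2 le3; set n := #|T|; lia.
have [small|big] := leqP #|off_layer w k| 2; [by right; exists k | left].
have /card_gt2P[x1 [x2 [x3 [[L1 L2 L3] [n12 n23 n31]]]]] := big_L.
have /card_gt2P[y1 [y2 [y3 [[C1 C2 C3] [m12 m23 m31]]]]] := big.
have Lw x : x \in L k -> x != w.
  by rewrite inE -dist_eq0 => /eqP->; move: k123; rewrite !inE; case: (k) => [|[|[|[]]]].
have LC x y : x \in L k -> y \in off_layer w k -> x != y.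
  by rewrite !inE => /eqP xk /andP[_]; apply: contraNneq => <-; rewrite xk.
have Cw y : y \in off_layer w k -> w != y by rewrite inE eq_sym => /andP[].
have res x y : x \in L k -> y \in off_layer w k -> dist e x w != dist e y w.
  by rewrite !inE => /eqP-> /andP[_]; rewrite eq_sym.
apply: (@partition_dim_resolved_pairs x1 y1 x2 y2 x3 y3 w w w); try exact: res.
all: rewrite /= ?inE ?negb_or; do ?(apply/andP; split).
all: by [|rewrite eq_sym|apply: LC|rewrite eq_sym; apply: LC|apply: Cw|rewrite eq_sym; apply: Lw].
Qed.

Lemma off_layer_pair w k p q x :
  #|off_layer w k| <= 2 -> p \in off_layer w k -> q \in off_layer w k -> p != q ->
  x \in off_layer w k -> x = p \/ x = q.
Proof.
move=> small Pp Pq pq Px; case: (eqVneq x p) => [|xp]; [by left | right].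
apply/eqP; apply: contraTT small => xq; rewrite -ltnNge; apply/card_gt2P.
by exists x, p, q; split; split; rewrite // eq_sym.
Qed.

Lemma on_layer w k p q x :
  #|off_layer w k| <= 2 -> p \in off_layer w k -> q \in off_layer w k -> p != q ->
  x != w -> x != p -> x != q -> dist e x w = k.
Proof.
move=> small Pp Pq pq xw xp xq; apply/eqP/negPn/negP => xk.
have Px : x \in off_layer w k by rewrite inE xw xk.
by case: (off_layer_pair small Pp Pq pq Px) => xE; [move: xp | move: xq]; rewrite xE eqxx.
Qed.

Section Diametral.
Variables u a b v : T.
Hypotheses (ua : e u a) (ab : e a b) (bv : e b v) (uv3 : dist e u v = 3).

Let au1 : dist e a u = 1. Proof. by apply/eqP; rewrite dist_eq1 esym. Qed.
Let bu2 : dist e b u = 2. Proof. by rewrite dist_sym (dist_inner3 ua ab bv uv3). Qed.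
Let vu3 : dist e v u = 3. Proof. by rewrite dist_sym. Qed.
Let bv1 : dist e b v = 1. Proof. by apply/eqP; rewrite dist_eq1. Qed.
Let av2 : dist e a v = 2.
Proof. by rewrite dist_sym (@dist_inner3 v b a u) // esym. Qed.

Lemma diametral_far_layer : #|off_layer u 3| <= 2 -> partition_dim e <= #|T| - 3.
Proof.
move=> small.
have Pa : a \in off_layer u 3 by rewrite inE -dist_eq0 au1.
have Pb : b \in off_layer u 3 by rewrite inE -dist_eq0 bu2.
have ab' : a != b by apply: (@neq_dist _ _ u); rewrite au1 bu2.
have uniq_uab : uniq [:: u; a; b].
  by apply: (@map_uniq _ _ (dist e ^~ u)); rewrite /= dist_xx au1 bu2.
have ub : ~~ e u b by rewrite -dist_eq1 dist_sym bu2.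
apply: (partition_dim_module_path uniq_uab ua ub ab) => m.
rewrite !inE !negb_or => /and3P[mu ma mb].
have m3 := on_layer small Pa Pb ab' mu ma mb.
have mb' : e m b.
  have [c mc c2] := dist_step m3.
  have Pc : c \in off_layer u 3 by rewrite inE -dist_eq0 c2.
  by case: (off_layer_pair small Pa Pb ab' Pc) => cE; subst c; rewrite // au1 in c2.
have ma' : ~~ e m a by apply/negP => ma'; have := dist_leqS u ma'; rewrite m3 au1.
by split; rewrite // -?dist_eq1 ?(dist_sym u) m3.
Qed.

Lemma diametral_near_layers : #|off_layer u 1| <= 2 -> #|off_layer v 1| <= 2 -> False.
Proof.
move=> small_u small_v.
have [x] : exists x, x \notin [:: u; a; b; v] by apply: exists_notin; apply: leq_ltn_trans n9.
rewrite !inE !negb_or => /and4P[xu xa xb xv].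
have Pb : b \in off_layer u 1 by rewrite inE -dist_eq0 bu2.
have Pv : v \in off_layer u 1 by rewrite inE -dist_eq0 vu3.
have Pa : a \in off_layer v 1 by rewrite inE -dist_eq0 av2.
have Pu : u \in off_layer v 1 by rewrite inE -dist_eq0 uv3.
have bv' : b != v by apply: (@neq_dist _ _ u); rewrite bu2 vu3.
have au' : a != u by apply: (@neq_dist _ _ v); rewrite av2 uv3.
have ux : e u x by rewrite esym -dist_eq1 (on_layer small_u Pb Pv bv' xu xb xv).
by have := dist_leqS v ux; rewrite uv3 (on_layer small_v Pa Pu au' xv xa xu).
Qed.

Lemma diametral_near_mid_layers :
  #|off_layer u 1| <= 2 -> #|off_layer v 2| <= 2 -> partition_dim e <= #|T| - 3.
Proof.
move=> small_u small_v.
have Pb : b \in off_layer u 1 by rewrite inE -dist_eq0 bu2.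
have Pv : v \in off_layer u 1 by rewrite inE -dist_eq0 vu3.
have Pb' : b \in off_layer v 2 by rewrite inE -dist_eq0 bv1.
have Pu : u \in off_layer v 2 by rewrite inE -dist_eq0 uv3.
have bv' : b != v by apply: (@neq_dist _ _ u); rewrite bu2 vu3.
have bu' : b != u by apply: (@neq_dist _ _ v); rewrite bv1 uv3.
have uniq_vbu : uniq [:: v; b; u].
  by apply: (@map_uniq _ _ (dist e ^~ u)); rewrite /= dist_xx bu2 vu3.
have vb : e v b by rewrite esym.
have vu : ~~ e v u by rewrite -dist_eq1 vu3.
have bu : ~~ e b u by rewrite -dist_eq1 bu2.
apply: (partition_dim_module_nbhd2_of3 uniq_vbu vb vu bu) => m.
rewrite !inE !negb_or => /and3P[mv mb mu].
have m_u := on_layer small_u Pb Pv bv' mu mb mv.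
have m_v := on_layer small_v Pb' Pu bu' mv mb mu.
have mb' : e m b.
  have [c mc c1] := dist_step m_v.
  have Pc : c \in off_layer v 2 by rewrite inE -dist_eq0 c1.
  by case: (off_layer_pair small_v Pb' Pu bu' Pc) => cE; subst c; rewrite // uv3 in c1.
by split; rewrite // -dist_eq1 ?m_u ?m_v.
Qed.

Lemma diametral_mid_layers :
  #|off_layer u 2| <= 2 -> #|off_layer v 2| <= 2 -> partition_dim e <= #|T| - 3.
Proof.
move=> small_u small_v.
have Pa : a \in off_layer u 2 by rewrite inE -dist_eq0 au1.
have Pv : v \in off_layer u 2 by rewrite inE -dist_eq0 vu3.
have Pb : b \in off_layer v 2 by rewrite inE -dist_eq0 bv1.
have Pu : u \in off_layer v 2 by rewrite inE -dist_eq0 uv3.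
have av' : a != v by apply: (@neq_dist _ _ u); rewrite au1 vu3.
have bu' : b != u by apply: (@neq_dist _ _ v); rewrite bv1 uv3.
have uniq_abuv : uniq [:: a; b; u; v].
  by apply: (@map_uniq _ _ (dist e ^~ u)); rewrite /= dist_xx au1 bu2 vu3.
apply: (partition_dim_module_nbhd2_of4 uniq_abuv) => m.
rewrite !inE !negb_or => /and4P[ma mb mu mv].
have m_u := on_layer small_u Pa Pv av' mu ma mv.
have m_v := on_layer small_v Pb Pu bu' mv mb mu.
have ma' : e m a.
  have [c mc c1] := dist_step m_u.
  have Pc : c \in off_layer u 2 by rewrite inE -dist_eq0 c1.
  by case: (off_layer_pair small_u Pa Pv av' Pc) => cE; subst c; rewrite // vu3 in c1.
have mb' : e m b.
  have [c mc c1] := dist_step m_v.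
  have Pc : c \in off_layer v 2 by rewrite inE -dist_eq0 c1.
  by case: (off_layer_pair small_v Pb Pu bu' Pc) => cE; subst c; rewrite // uv3 in c1.
by split; rewrite // -dist_eq1 ?m_u ?m_v.
Qed.

End Diametral.

Lemma diametral_partition_dim u a b v :
  e u a -> e a b -> e b v -> dist e u v = 3 -> partition_dim e <= #|T| - 3.
Proof.
move=> ua ab bv uv3.
have [vb ba au] : [/\ e v b, e b a & e a u] by split; rewrite esym.
have vu3 : dist e v u = 3 by rewrite dist_sym.
have [//|[ku ku123 small_u]] := layer_or_partition_dim u.
have [//|[kv kv123 small_v]] := layer_or_partition_dim v.
move: ku123 kv123 small_u small_v; rewrite !inE.
case/or3P=> /eqP-> /or3P[]/eqP-> small_u small_v.
all: try exact: diametral_far_layer ua ab bv uv3 small_u.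
all: try exact: diametral_far_layer vb ba au vu3 small_v.
  by case: (diametral_near_layers ua ab bv uv3 small_u small_v).
  exact: diametral_near_mid_layers ua ab bv uv3 small_u small_v.
  exact: diametral_near_mid_layers vb ba au vu3 small_v small_u.
exact: diametral_mid_layers ua ab bv uv3 small_u small_v.
Qed.

Lemma exists_diametral_path :
  exists u a b v, [/\ e u a, e a b, e b v & dist e u v = 3].
Proof.
have T_gt0 : 0 < #|T| by apply: leq_trans n9.
have [u Mu] := eq_bigmax (fun u => \max_v dist e u v) T_gt0.
have [v Mv] := eq_bigmax (dist e u) T_gt0.
have uv3 : dist e u v = 3 by rewrite -diam3 /diam Mu Mv.
have [a ua av2] := dist_step uv3.
have [b ab bv1] := dist_step av2.
by exists u, a, b, v; split; rewrite // -dist_eq1 bv1.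
Qed.

End Partition.

Theorem proposition12 (T : finType) (e : rel T) :
  simple_graph e -> connected_graph e ->
  9 <= #|T| ->
  2 * twin_number e <= #|T| ->
  diam e = 3 ->
  partition_dim e <= #|T| - 3.
Proof.
move=> [esym eirr] conn n9 tw diam3.
have [u [a [b [v [ua ab bv uv3]]]]] := exists_diametral_path eirr conn n9 diam3.
exact: (diametral_partition_dim esym eirr conn n9 tw diam3 ua ab bv uv3).
Qed.
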